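(* Let $n\ge 3$ and let $P=(A_1,\dots,A_n)$ be a cyclic $n$-gon in the plane (distinct vertices lying on a circle) whose vertices are ordered anticlockwise around the circle. Then for all $a,b\in\{1,\dots,n\}$ (including the cases $b=a$, $b=a+1$ and $b=a-1$), with all indices taken modulo $n$ in $\{1,\dots,n\}$, the following three determinants vanish: \[ \begin{vmatrix} x_{b,b+1} & S_{a,b,b+1} & S_{a+1,b,b+1}\\ -x_{a,a+1} & S_{a,a+1,b} & S_{a,a+1,b+1}\\ 0 & x_{a,b} & x_{a+1,b+1} \end{vmatrix} = 0,\qquad \begin{vmatrix} x_{b,b+1} & S_{a,b,b+1} & S_{a+1,b,b+1}\\ x_{a,a+1} & S_{a,a+1,b+1} & S_{a,a+1,b}\\ 0 & x_{a,b+1} & x_{a+1,b} \end{vmatrix} = 0,\] \[\begin{vmatrix} x_{a+1,b} & S_{a,a+1,b} & S_{a+1,b,b+1}\\ -x_{a,b+1} & S_{a,b,b+1} & S_{a,a+1,b+1}\\ 0 & x_{a,b} & x_{a+1,b+1} \end{vmatrix} = 0.\] (Equivalently: these determinants vanish for every diamond, including the gluing diamonds, of the plane polygonal Heronian frieze of $P$, the diamond for $(a,b)$ being the one associated with the quadruple of vertices $(A_a,A_{a+1},A_b,A_{b+1})$.)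
   Context: For points $A_p=(x_p,y_p)$ in the plane, $x_{pq}:=(x_q-x_p)^2+(y_q-y_p)^2$ is the squared distance between $A_p$ and $A_q$ (so $x_{pp}=0$), and $S_{pqr}:=2[(x_q-x_p)(y_r-y_p)-(y_q-y_p)(x_r-x_p)]$ is four times the signed area of the triangle $A_pA_qA_r$ (so it vanishes if two of $p,q,r$ coincide, and is positive for anticlockwise-ordered vertices). *)

From mathcomp Require Import all_boot all_order all_algebra.
Set Implicit Arguments. Unset Strict Implicit. Unset Printing Implicit Defensive.
Import Order.TTheory GRing.Theory Num.Theory.
Local Open Scope ring_scope.

Definition pt (R : realFieldType) := (R * R)%type.

Definition sqd (R : realFieldType) (p q : pt R) : R :=
  (q.1 - p.1) ^+ 2 + (q.2 - p.2) ^+ 2.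

(* S_{pqr} = four times the signed area *)
Definition S4 (R : realFieldType) (p q r : pt R) : R :=
  2 * ((q.1 - p.1) * (r.2 - p.2) - (q.2 - p.2) * (r.1 - p.1)).

(* successor of an index modulo n (indices 0..n-1 stand for 1..n) *)
Definition isucc (n : nat) (i : 'I_n.+1) : 'I_n.+1 := inord ((i.+1) %% n.+1).

Definition cyclic_polygon (R : realFieldType) (n : nat) (P : 'I_n.+1 -> pt R) :=
  injective P /\ exists (c : pt R) (r : R), 0 < r /\ forall i, sqd c (P i) = r ^+ 2.

Definition anticlockwise (R : realFieldType) (n : nat) (P : 'I_n.+1 -> pt R) :=
  forall i j k : 'I_n.+1, (i < j)%N -> (j < k)%N -> 0 < S4 (P i) (P j) (P k).

Definition det3 (R : realFieldType) (a11 a12 a13 a21 a22 a23 a31 a32 a33 : R) : R :=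
  \det (\matrix_(i < 3, j < 3)
          nth 0 (nth [::] [:: [:: a11; a12; a13]; [:: a21; a22; a23]; [:: a31; a32; a33]] i) j).

(* Each of the three determinants factors, as a polynomial identity in the
   coordinates of s = A_a, p = A_{a+1}, q = A_b, r = A_{b+1}, into a quadratic
   form in the squared distances times the cocircularity polynomial
   x_{sp} S_{sqr} + x_{sq} S_{srp} + x_{sr} S_{spq}.  The latter is twice the
   determinant with rows (x, y, x^2 + y^2) of p, q, r taken relative to s, and
   it vanishes on a circle through s because there the column x^2 + y^2 is a
   linear combination of the two coordinate columns. *)

From mathcomp Require Import all_boot all_order all_algebra.
From mathcomp Require Import ring.
Import GRing.Theory.
Local Open Scope ring_scope.

Section Cocircularity.

Context {R : realFieldType}.
Implicit Types (s p q r c : pt R) (rho : R).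

Lemma det3E (a11 a12 a13 a21 a22 a23 a31 a32 a33 : R) :
  det3 a11 a12 a13 a21 a22 a23 a31 a32 a33 =
  a11 * (a22 * a33 - a23 * a32) - a12 * (a21 * a33 - a23 * a31)
  + a13 * (a21 * a32 - a22 * a31).
Proof.
rewrite /det3 (expand_det_row _ 0) !big_ord_recr big_ord0 /= /cofactor.
rewrite !(expand_det_row _ 0) !big_ord_recr big_ord0 /= /cofactor.
by rewrite !det_mx11 !mxE /= !big_ord0 expr0 expr1; ring.
Qed.

Definition cocircularity s p q r : R :=
  sqd s p * S4 s q r + sqd s q * S4 s r p + sqd s r * S4 s p q.

Lemma cocircularityE c rho s p q r :
  let e z := sqd c z - rho in
  cocircularity s p q r =
  e p * S4 s q r + e q * S4 s r p + e r * S4 s p q - e s * S4 p q r.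
Proof.
case: s p q r c => [s1 s2] [p1 p2] [q1 q2] [r1 r2] [c1 c2].
by rewrite /cocircularity /sqd /S4 /=; ring.
Qed.

Lemma cocircularity_eq0 c rho s p q r :
  sqd c s = rho -> sqd c p = rho -> sqd c q = rho -> sqd c r = rho ->
  cocircularity s p q r = 0.
Proof.
move=> cs cp cq cr; rewrite (cocircularityE c rho) /= cs cp cq cr subrr.
by rewrite !mul0r !addr0 subr0.
Qed.

Lemma diamond_det1E s p q r :
  det3 (sqd q r) (S4 s q r) (S4 p q r)
       (- sqd s p) (S4 s p q) (S4 s p r)
       0 (sqd s q) (sqd p r) =
  (sqd s p + sqd q r + sqd s q + sqd p r - sqd s r - sqd p q)
  * cocircularity s p q r.
Proof.
case: s p q r => [s1 s2] [p1 p2] [q1 q2] [r1 r2].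
by rewrite det3E /cocircularity /sqd /S4 /=; ring.
Qed.

Lemma diamond_det2E s p q r :
  det3 (sqd q r) (S4 s q r) (S4 p q r)
       (sqd s p) (S4 s p r) (S4 s p q)
       0 (sqd s r) (sqd p q) =
  (sqd s q + sqd p r - sqd s p - sqd q r - sqd s r - sqd p q)
  * cocircularity s p q r.
Proof.
case: s p q r => [s1 s2] [p1 p2] [q1 q2] [r1 r2].
by rewrite det3E /cocircularity /sqd /S4 /=; ring.
Qed.

Lemma diamond_det3E s p q r :
  det3 (sqd p q) (S4 s p q) (S4 p q r)
       (- sqd s r) (S4 s q r) (S4 s p r)
       0 (sqd s q) (sqd p r) =
  (sqd s q + sqd s r + sqd p q + sqd p r - sqd s p - sqd q r)
  * cocircularity s p q r.
Proof.
case: s p q r => [s1 s2] [p1 p2] [q1 q2] [r1 r2].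
by rewrite det3E /cocircularity /sqd /S4 /=; ring.
Qed.

End Cocircularity.

Theorem corollary2p7 (R : realFieldType) (n : nat) (P : 'I_n.+1 -> pt R) :
  (2 <= n)%N -> cyclic_polygon P -> anticlockwise P ->
  forall a b : 'I_n.+1,
    let a1 := isucc a in let b1 := isucc b in
    let x := fun i j => sqd (P i) (P j) in
    let S := fun i j k => S4 (P i) (P j) (P k) in
    [/\ det3 (x b b1) (S a b b1) (S a1 b b1)
             (- x a a1) (S a a1 b) (S a a1 b1)
             0 (x a b) (x a1 b1) = 0,
        det3 (x b b1) (S a b b1) (S a1 b b1)
             (x a a1) (S a a1 b1) (S a a1 b)
             0 (x a b1) (x a1 b) = 0 &
        det3 (x a1 b) (S a a1 b) (S a1 b b1)
             (- x a b1) (S a b b1) (S a a1 b1)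
             0 (x a b) (x a1 b1) = 0].
Proof.
move=> _ [_ [c [r [_ onC]]]] _ a b a1 b1 x S.
have cocirc0 : cocircularity (P a) (P a1) (P b) (P b1) = 0.
  by apply: (cocircularity_eq0 c (r ^+ 2)); apply: onC.
by rewrite /x /S diamond_det1E diamond_det2E diamond_det3E cocirc0 !mulr0.
Qed.
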